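(* Let $G$ be a split connected reductive group, $M\subseteq G$ a Levi subgroup containing the maximal torus $T$, and $\lambda\in X^*(T)$. For every $w^M\in W^M$, $(w^M)^{-1}\mathrm{Adm}_M(\lambda)\,w^M\subseteq\mathrm{Adm}(\lambda)$.
   Context: $W^M=\{w\in W:\ell(s_\alpha w)>\ell(w)\text{ for all simple roots }\alpha\text{ of }M\}$. For $\lambda\in X^*(T)$, $\mathrm{Adm}(\lambda)=\{\tilde w\in\tilde W:\tilde w\le t_{w(\lambda)}\text{ for some }w\in W\}$, where $\tilde W=X^*(T)\rtimes W$ carries the Bruhat order $\le$ defined via the dominant base alcove (elements in different cosets of the affine Weyl group are incomparable); $\mathrm{Adm}_M(\lambda)\subseteq\tilde W_M=X^*(T)\rtimes W_M$ is defined in the same way for $M$ (with $M$'s dominant base alcove). *)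

(* Combinatorial model of a split connected reductive group
   through its (reduced) root datum. *)
From HB Require Import structures.
From mathcomp Require Import all_boot all_order all_algebra.
From Stdlib Require Import Relations.
Set Implicit Arguments. Unset Strict Implicit. Unset Printing Implicit Defensive.
Import Order.TTheory GRing.Theory Num.Theory.
Local Open Scope ring_scope.

Section RootData.
Variable n : nat.

(* X^*(T) and X_*(T) are both identified with Z^n (column vectors), with
   the perfect pairing <x, c> = sum_i x_i c_i. *)
Definition lat := 'cV[int]_n.
Definition dot (x c : lat) : int := \sum_(i < n) x i 0 * c i 0.

(* a root together with its coroot *)
Definition rootpair := (lat * lat)%type.

Definition sref (p : rootpair) : 'M[int]_n := 1%:M - p.1 *m p.2^T.
Definition srefv (p : rootpair) (c : lat) : lat := c - dot p.1 c *: p.2.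

(* root datum (Phi, Phi^v) with the bijection alpha |-> alpha^v *)
Definition is_root_datum (R : seq rootpair) : Prop :=
  [/\ uniq (map fst R), uniq (map snd R),
      (forall p, p \in R -> dot p.1 p.2 = 2),
      (forall p q, p \in R -> q \in R -> sref p *m q.1 \in map fst R) &
      (forall p q, p \in R -> q \in R -> srefv p q.2 \in map snd R)].

Definition reduced (R : seq rootpair) : Prop :=
  forall p, p \in R -> (2 : int) *: p.1 \notin map fst R.

(* Borel B ⊇ T  <->  positive system {alpha | <alpha, xi> > 0} for a regular xi *)
Definition regular (R : seq rootpair) (xi : lat) : Prop :=
  forall p, p \in R -> dot p.1 xi != 0.
Definition pos (xi : lat) (a : lat) : bool := 0 < dot a xi.

(* Levi M ⊇ T  <->  M = Z_G(mu) for a cocharacter mu; roots of M *)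
Definition levi_roots (R : seq rootpair) (mu : lat) : seq rootpair :=
  [seq p <- R | dot p.1 mu == 0].

Definition prod_refl (s : seq rootpair) : 'M[int]_n :=
  foldr (fun p m => sref p *m m) 1%:M s.
Definition inW (R : seq rootpair) (w : 'M[int]_n) : Prop :=
  exists s : seq rootpair, {subset s <= R} /\ w = prod_refl s.

(* extended affine Weyl group X^* ⋊ W: (lam, w) stands for t_lam w,
   acting on X^* ⊗ R by x |-> lam + w x *)
Definition tW := (lat * 'M[int]_n)%type.
Definition mulW (x y : tW) : tW := (x.1 + x.2 *m y.1, x.2 *m y.2).
Definition transl (lam : lat) : tW := (lam, 1%:M).

(* length = number of affine root hyperplanes {<x,alpha^v> = k} separating the
   dominant base alcove {0 < <x,alpha^v> < 1, alpha > 0} from its image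
   (Iwahori--Matsumoto formula for this count). *)
Definition len (R : seq rootpair) (xi : lat) (x : tW) : nat :=
  (\sum_(p <- R | pos xi p.1)
     (if pos xi (invmx x.2 *m p.1) then `|dot x.1 p.2|%N
      else `|dot x.1 p.2 - 1|%N))%N.

(* affine reflection in the hyperplane <x, alpha^v> = k *)
Definition aref (p : rootpair) (k : int) : tW := (k *: p.1, sref p).

Definition bstep (R : seq rootpair) (xi : lat) (x y : tW) : Prop :=
  exists (p : rootpair) (k : int),
    [/\ p \in R, y = mulW (aref p k) x & (len R xi x < len R xi y)%N].
Definition bruhat_le (R : seq rootpair) (xi : lat) : relation tW :=
  clos_refl_trans tW (bstep R xi).

Definition Adm (R : seq rootpair) (xi : lat) (lam : lat) (x : tW) : Prop :=
  exists w, inW R w /\ bruhat_le R xi x (transl (w *m lam)).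

Definition lenW (R : seq rootpair) (xi : lat) (w : 'M[int]_n) : nat :=
  len R xi (0, w).
Definition simple_root (R : seq rootpair) (xi : lat) (p : rootpair) : Prop :=
  [/\ p \in R, pos xi p.1 &
      ~ exists q r, [/\ q \in R, r \in R, pos xi q.1, pos xi r.1 & p.1 = q.1 + r.1]].
Definition WM (R : seq rootpair) (xi mu : lat) (w : 'M[int]_n) : Prop :=
  inW R w /\
  forall p, simple_root (levi_roots R mu) xi p ->
    (lenW R xi w < lenW R xi (sref p *m w))%N.

Definition conjW (v : 'M[int]_n) (x : tW) : tW :=
  mulW (mulW (0, invmx v) x) (0, v).
End RootData.

From HB Require Import structures.
From mathcomp Require Import all_boot all_order all_algebra.
From mathcomp Require Import zify ring.
From Stdlib Require Import Relations Classical.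
Set Implicit Arguments. Unset Strict Implicit. Unset Printing Implicit Defensive.
Import Order.TTheory GRing.Theory Num.Theory.
Local Open Scope ring_scope.

(* Identify [t_lam w] with the alcove [t_lam w A], [A] the dominant base alcove: its
   length counts the affine walls separating [A] from [t_lam w A], and the reflection in
   a wall [H] lengthens it exactly when [A] and [t_lam w A] lie on the same side of [H].
   For [wM] in [W^M], [wM^-1] maps the positive roots of [M] to positive roots (by
   induction on the height, the simple ones being handled by the length condition), so
   conjugation by [wM] maps the walls of [M] to walls of [G] without changing on which
   side of them [A] and [t_lam w A] lie.  Hence it maps Bruhat chains of [M] to Bruhat
   chains of [G], and [t_(v lam)] to [t_(wM^-1 v lam)].  That reflections permute root/coroot pairs, which the definition of
   a root datum states only for roots and coroots separately, follows by finiteness. *)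

Section Pairing.
Variable n : nat.
Implicit Types (x y c : lat n) (p q : rootpair n) (A B : 'M[int]_n).

Lemma dotE x c : dot x c = (x^T *m c) 0 0.
Proof. by rewrite /dot !mxE; apply: eq_bigr => i _; rewrite mxE. Qed.

Lemma dotC x c : dot x c = dot c x.
Proof. by rewrite /dot; apply: eq_bigr => i _; rewrite mulrC. Qed.

Lemma dotDl x y c : dot (x + y) c = dot x c + dot y c.
Proof. by rewrite /dot -big_split; apply: eq_bigr => i _; rewrite mxE mulrDl. Qed.

Lemma dotZl a x c : dot (a *: x) c = a * dot x c.
Proof. by rewrite /dot mulr_sumr; apply: eq_bigr => i _; rewrite mxE mulrA. Qed.

Lemma dotNl x c : dot (- x) c = - dot x c.
Proof. by rewrite -scaleN1r dotZl mulN1r. Qed.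

Lemma dotBl x y c : dot (x - y) c = dot x c - dot y c.
Proof. by rewrite dotDl dotNl. Qed.

Lemma dot0l c : dot 0 c = 0.
Proof. by rewrite -(scale0r (0 : lat n)) dotZl mul0r. Qed.

Lemma dotDr x c y : dot x (c + y) = dot x c + dot x y.
Proof. by rewrite dotC dotDl dotC [dot y x]dotC. Qed.

Lemma dotZr a x c : dot x (a *: c) = a * dot x c.
Proof. by rewrite dotC dotZl dotC. Qed.

Lemma dotNr x c : dot x (- c) = - dot x c.
Proof. by rewrite dotC dotNl dotC. Qed.

Lemma dotBr x c y : dot x (c - y) = dot x c - dot x y.
Proof. by rewrite dotDr dotNr. Qed.

Lemma dot_mulmxl A x c : dot (A *m x) c = dot x (A^T *m c).
Proof. by rewrite !dotE trmx_mul mulmxA. Qed.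

Lemma dot_suml (I : Type) (r : seq I) (P : pred I) (F : I -> lat n) c :
  dot (\sum_(i <- r | P i) F i) c = \sum_(i <- r | P i) dot (F i) c.
Proof.
elim/big_rec2: _ => [|i y1 y2 _ <-]; first by rewrite dot0l.
by rewrite dotDl.
Qed.

Lemma dot_delta_mx x (i : 'I_n) : dot x (delta_mx i 0) = x i 0.
Proof.
rewrite /dot (bigD1 i) //= big1 => [|j /negbTE ji]; rewrite mxE ?eqxx ?ji ?mulr0 //.
by rewrite mulr1 addr0.
Qed.

Lemma trmx_mul_dot x c : c^T *m x = (dot x c)%:M.
Proof. by rewrite {1}[c^T *m x]mx11_scalar dotC dotE. Qed.

Lemma mulmx_col11 (u : lat n) (M : 'M[int]_1) : u *m M = M 0 0 *: u.
Proof. by rewrite {1}[M]mx11_scalar mul_mx_scalar. Qed.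
End Pairing.

Section Reflections.
Variable n : nat.
Implicit Types (x y c : lat n) (p q : rootpair n).

Lemma sref_mul p x : sref p *m x = x - dot x p.2 *: p.1.
Proof.
rewrite /sref mulmxBl mul1mx -mulmxA mulmx_col11; congr (_ - _ *: _).
by rewrite dotC dotE.
Qed.

Lemma tr_sref_mul p c : (sref p)^T *m c = srefv p c.
Proof.
rewrite /sref /srefv linearB /= trmx1 trmx_mul trmxK mulmxBl mul1mx -mulmxA.
by rewrite mulmx_col11 dotE.
Qed.

Lemma srefK p : dot p.1 p.2 = 2 -> sref p *m sref p = 1%:M.
Proof.
move=> p2; rewrite /sref mulmxBl mul1mx mulmxBr mulmx1 -!mulmxA.
rewrite [p.2^T *m (p.1 *m _)]mulmxA trmx_mul_dot p2 mul_scalar_mx -scalemxAr.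
by rewrite opprB addrA; apply/matrixP => i j; rewrite !mxE; ring.
Qed.

Lemma srefvK p c : dot p.1 p.2 = 2 -> srefv p (srefv p c) = c.
Proof. by move=> p2; rewrite -!tr_sref_mul mulmxA -trmx_mul srefK // trmx1 mul1mx. Qed.

Lemma dot_sref p x c : dot p.1 p.2 = 2 -> dot (sref p *m x) (srefv p c) = dot x c.
Proof. by move=> p2; rewrite dot_mulmxl tr_sref_mul srefvK. Qed.

Lemma sref_conj p q v : dot p.1 p.2 = 2 ->
  sref p *m (sref q *m (sref p *m v)) = v - dot v (srefv p q.2) *: (sref p *m q.1).
Proof.
move=> p2; rewrite [sref q *m _]sref_mul mulmxBr -scalemxAr mulmxA srefK // mul1mx.
by rewrite dot_mulmxl tr_sref_mul.
Qed.

Definition srefp p q : rootpair n := (sref p *m q.1, srefv p q.2).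

Lemma srefpE p q : srefp p q = (q.1 - dot q.1 p.2 *: p.1, q.2 - dot p.1 q.2 *: p.2).
Proof. by rewrite /srefp sref_mul. Qed.

Lemma srefpK p q : dot p.1 p.2 = 2 -> srefp p (srefp p q) = q.
Proof. by move=> p2; rewrite /srefp /= srefvK // mulmxA srefK // mul1mx; case: q. Qed.
End Reflections.

Lemma ler_sum_mem (R : numDomainType) (T : eqType) (s : seq T) (F : T -> R) x :
  x \in s -> (forall y, 0 <= F y) -> F x <= \sum_(y <- s) F y.
Proof.
move=> xs F0; elim: s xs => [|u s IH] //=; rewrite inE big_cons => /orP [/eqP -> | /IH h].
  by rewrite lerDl sumr_ge0.
by apply: le_trans h _; rewrite lerDr.
Qed.

Lemma sum_involution (V : nmodType) (T : eqType) (s : seq T) (f : T -> T)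
    (P : pred T) (F : T -> V) :
  uniq s -> (forall x, x \in s -> f x \in s) -> involutive f ->
  \sum_(x <- s | P x) F x = \sum_(x <- s | P (f x)) F (f x).
Proof.
move=> us fs fK; have finj := inv_inj fK.
have [_ fss] : (size (map f s) = size s) * (map f s =i s).
  apply: uniq_min_size; rewrite ?map_inj_uniq ?size_map //.
  by move=> z /mapP [x xs ->]; apply: fs.
rewrite (perm_big (map f s)) ?big_map //.
by apply: uniq_perm; rewrite ?map_inj_uniq // => z; rewrite fss.
Qed.

Section DatumClosure.
Variable n : nat.
Implicit Types (x y c : lat n) (p q : rootpair n).

(* The pairings of a finite set against a fixed vector are bounded. *)
Lemma no_progression_in (s : seq (lat n)) e (f : nat -> lat n) a t :
  t != 0 -> (forall m, f m \in s) -> (forall m, dot (f m) e = a + m%:Z * t) -> False.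
Proof.
move=> t0 fs fE.
set B := \sum_(u <- s) `|dot u e|.
have B0 : 0 <= B by rewrite sumr_ge0.
pose m := (absz a + absz B + 1)%N.
have := ler_sum_mem (F := fun u => `|dot u e|) (fs m) (fun _ => normr_ge0 _).
rewrite fE -/B.
have -> : m%:Z = `|a| + B + 1 by rewrite /m !PoszD !abszE (ger0_norm B0).
by move: t0 B0; clear; nia.
Qed.

Variables (R : seq (rootpair n)) (p q r r' : rootpair n).
Hypotheses (hR : is_root_datum R) (pR : p \in R) (qR : q \in R).
Hypotheses (rR : r \in R) (r_root : r.1 = sref p *m q.1).
Hypotheses (r'R : r' \in R) (r'_coroot : r'.2 = srefv p q.2).

(* [r] is the root [s_p q] with its own coroot; [d] measures how far [s_p^v q^v] is
   from being that coroot. *)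
Let d := srefv p q.2 - r.2.

Lemma sref_roots_closed s v : s \in R -> v \in map fst R -> sref s *m v \in map fst R.
Proof. by case: hR => _ _ _ hc _ sR /mapP [t tR ->]; apply: hc. Qed.

Lemma srefv_coroots_closed s v : s \in R -> v \in map snd R -> srefv s v \in map snd R.
Proof. by case: hR => _ _ _ _ hcv sR /mapP [t tR ->]; apply: hcv. Qed.

Lemma dot_root_coroot2 s : s \in R -> dot s.1 s.2 = 2.
Proof. by case: hR => _ _ h _ _; apply: h. Qed.

(* [s_p s_q s_p s_r] is the transvection [v |-> v - <v, d> r.1]; it permutes the
   finite set of roots, so [<v, d> = 0] for every root [v]. *)
Lemma datum_defect_orthogonal v : v \in map fst R -> dot v d = 0.
Proof.
move=> vR; apply/eqP/negPn/negP => hvd.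
have p2 := dot_root_coroot2 pR; have r2 := dot_root_coroot2 rR.
have rd : dot r.1 (srefv p q.2) = 2 by rewrite r_root dot_sref // dot_root_coroot2.
have rd0 : dot r.1 d = 0 by rewrite /d dotBr rd r2 subrr.
pose u (w : lat n) := sref p *m (sref q *m (sref p *m (sref r *m w))).
have uE w : u w = w - dot w d *: r.1.
  rewrite /u sref_conj // -r_root sref_mul dotBl dotZl rd /d dotBr.
  by apply/matrixP => i j; rewrite !mxE; ring.
pose f m := iter m u v.
have fE m : f m = v - (m%:Z * dot v d) *: r.1.
  elim: m => [|m IH]; first by rewrite /f /= mul0r scale0r subr0.
  rewrite /f iterS -/(f m) uE IH dotBl dotZl rd0 mulr0 subr0 -addrA -opprD -scalerDl.
  by congr (_ - _ *: _); rewrite -addn1 PoszD; ring.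
apply: (@no_progression_in (map fst R) r.2 f (dot v r.2) (- (2 * dot v d))).
- by rewrite oppr_eq0 mulf_neq0.
- elim=> [|m IH] //; rewrite /f iterS /u.
  by do 4 apply: sref_roots_closed => //.
- by move=> m; rewrite fE dotBl dotZl r2; ring.
Qed.

(* [s_{r'} s_r] translates the coroot [srefv p q.2] by [2 d]. *)
Lemma datum_defect0 : d = 0.
Proof.
apply/matrixP => i j; rewrite (ord1 j) [RHS]mxE; apply/eqP/negPn/negP => hd.
have r'd : dot r'.1 d = 0 by apply: datum_defect_orthogonal; apply: map_f.
have r'c : dot r'.1 (srefv p q.2) = 2 by rewrite -r'_coroot dot_root_coroot2.
have r'r : dot r'.1 r.2 = 2.
  by move: r'd; rewrite /d dotBr r'c => /eqP; rewrite subr_eq0 => /eqP <-.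
have rc : dot r.1 (srefv p q.2) = 2.
  by rewrite r_root dot_sref ?dot_root_coroot2.
have rd0 : dot r.1 d = 0 by apply: datum_defect_orthogonal; apply: map_f.
set c := srefv p q.2 in r'c rc *.
have cR : c \in map snd R by rewrite /c -r'_coroot map_f.
have dE : d = c - r.2 by [].
have r'cE : r'.2 = c by rewrite r'_coroot.
clearbody c.
pose v (w : lat n) := srefv r' (srefv r w).
pose g m := iter m v c.
have gE m : g m = c + (2 * m%:Z) *: d.
  elim: m => [|m IH]; first by rewrite /g /= mulr0 scale0r addr0.
  rewrite /g iterS -/(g m) IH /v /srefv !dotDr !dotZr.
  rewrite rd0 mulr0 addr0 rc dotNr dotZr r'c r'r r'd mulr0 addr0.
  have -> : (m.+1)%:Z = m%:Z + 1 by rewrite -addn1 PoszD.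
  by rewrite dE r'cE; apply/matrixP => a b; rewrite !mxE; ring.
apply: (@no_progression_in (map snd R) (delta_mx i 0) g
  (dot c (delta_mx i 0)) (2 * d i 0)).
- by rewrite mulf_neq0.
- elim=> [|m IH] //.
  by rewrite /g iterS /v; do 2 apply: srefv_coroots_closed => //.
- by move=> m; rewrite gE dotDl dotZl !dot_delta_mx; ring.
Qed.
End DatumClosure.

Lemma root_datum_srefp n (R : seq (rootpair n)) p q : is_root_datum R ->
  p \in R -> q \in R -> srefp p q \in R.
Proof.
move=> hR pR qR.
have /mapP [r rR r_root] : sref p *m q.1 \in map fst R by case: hR => _ _ _ hc _; apply: hc.
have /mapP [r' r'R r'_coroot] : srefv p q.2 \in map snd R.
  by case: hR => _ _ _ _ hcv; apply: hcv.
have /eqP := datum_defect0 hR pR qR rR (esym r_root) r'R (esym r'_coroot).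
rewrite subr_eq0 => /eqP c_eq; rewrite /srefp r_root c_eq.
by case: r rR {r_root c_eq}.
Qed.

Definition root_system n (S : seq (rootpair n)) (xi : lat n) : Prop :=
  [/\ uniq S, (forall p, p \in S -> dot p.1 p.2 = 2),
      (forall p q, p \in S -> q \in S -> srefp p q \in S) &
      (forall p, p \in S -> dot p.1 xi != 0)].

Lemma root_datum_system n (R : seq (rootpair n)) xi :
  is_root_datum R -> regular R xi -> root_system R xi.
Proof.
move=> hR hreg; have [uR _ R2 _ _] := hR; split => //.
- exact: map_uniq uR.
- by move=> p q; apply: root_datum_srefp.
Qed.

Lemma posN n (xi v : lat n) : dot v xi != 0 -> pos xi (- v) = ~~ pos xi v.
Proof. by rewrite /pos dotNl oppr_gt0 => h; rewrite -leNgt le_eqVlt (negbTE h). Qed.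

Lemma prod_refl_cat n (s1 s2 : seq (rootpair n)) :
  prod_refl (s1 ++ s2) = prod_refl s1 *m prod_refl s2.
Proof. by elim: s1 => [|a s1 IH] /=; rewrite ?mul1mx // IH mulmxA. Qed.

Lemma invmx_mulmx1 n (A B : 'M[int]_n) : A *m B = 1%:M -> invmx A = B.
Proof.
move=> AB; have [uA _] := mulmx1_unit AB.
by rewrite -[B]mul1mx -(mulVmx uA) -mulmxA AB mulmx1.
Qed.

Section RootSystem.
Variables (n : nat) (S : seq (rootpair n)) (xi : lat n).
Hypothesis hS : root_system S xi.
Implicit Types (x : tW n) (v : lat n) (p q : rootpair n) (s : seq (rootpair n)).

Lemma uniq_root_system : uniq S. Proof. by case: hS. Qed.

Lemma dot_root_coroot p : p \in S -> dot p.1 p.2 = 2.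
Proof. by case: hS => _ h _ _; apply: h. Qed.

Lemma srefp_in p q : p \in S -> q \in S -> srefp p q \in S.
Proof. by case: hS => _ _ h _; apply: h. Qed.

Lemma root_regular p : p \in S -> dot p.1 xi != 0.
Proof. by case: hS => _ _ _ h; apply: h. Qed.

Lemma srefpK_in p q : p \in S -> srefp p (srefp p q) = q.
Proof. by move=> pS; apply/srefpK/dot_root_coroot. Qed.

Definition negp p : rootpair n := (- p.1, - p.2).

Lemma negpK : involutive negp.
Proof. by case=> a b; rewrite /negp !opprK. Qed.

Lemma srefp_self p : p \in S -> srefp p p = negp p.
Proof.
move=> pS; rewrite srefpE dot_root_coroot //.
by congr (_, _); apply/matrixP => i j; rewrite !mxE; ring.
Qed.

Lemma negp_in p : p \in S -> negp p \in S.
Proof. by move=> pS; rewrite -srefp_self //; apply: srefp_in. Qed.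

Definition rho2 : lat n := \sum_(q <- S | pos xi q.1) q.1.

(* Reindexing by [s_p] writes [2 <rho2, p^v>] as a sum of nonnegative terms, the
   one at [p] being [2]. *)
Lemma rho2_coroot_gt0 p : p \in S -> pos xi p.1 -> 0 < dot rho2 p.2.
Proof.
move=> pS pp.
pose g q := dot q.1 p.2.
pose excess q := (if pos xi q.1 then g q else 0) - (if pos xi (srefp p q).1 then g q else 0).
have e1 : dot rho2 p.2 = \sum_(q <- S) (if pos xi q.1 then g q else 0).
  by rewrite /rho2 dot_suml big_mkcond.
have e2 : dot rho2 p.2 = \sum_(q <- S) (if pos xi (srefp p q).1 then - g q else 0).
  rewrite e1 (@sum_involution _ _ _ (srefp p) xpredT); last 3 first.
  - exact: uniq_root_system.
  - by move=> q; apply: srefp_in.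
  - by move=> q; apply: srefpK_in.
  apply: eq_bigr => q _; rewrite /g srefpE /= dotBl dotZl dot_root_coroot //.
  by case: ifP => // _; ring.
have twice : dot rho2 p.2 + dot rho2 p.2 = \sum_(q <- S) excess q.
  rewrite {1}e1 e2 -big_split; apply: eq_bigr => q _ /=.
  by rewrite /excess; case: ifP; case: ifP => *; ring.
have excess_ge0 q : 0 <= excess q.
  rewrite /excess /g /pos srefpE /= dotBl dotZl.
  move: pp; rewrite /pos => pp.
  case: ifP => h1; case: ifP => h2; rewrite ?subrr //.
  + by move/negbT: h2; rewrite -leNgt => h2; nia.
  + by move/negbT: h1; rewrite -leNgt => h1; nia.
have excess_p : excess p = 2.
  rewrite /excess pp /g dot_root_coroot // srefpE /= dot_root_coroot //.
  have -> : p.1 - 2 *: p.1 = - p.1 by apply/matrixP => i j; rewrite !mxE; ring.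
  by rewrite posN ?root_regular // pp /= subr0.
move: twice; rewrite (bigD1_seq p) ?uniq_root_system //= excess_p.
set rest := \sum_(q <- S | q != p) excess q.
have : 0 <= rest by apply: sumr_ge0.
lia.
Qed.

Lemma rho2_coroot_lt0 p : p \in S -> ~~ pos xi p.1 -> dot rho2 p.2 < 0.
Proof.
move=> pS np; have := rho2_coroot_gt0 (negp_in pS).
by rewrite /negp /= posN ?root_regular // np dotNr oppr_gt0; apply.
Qed.

Lemma inW1 : inW S 1%:M.
Proof. by exists [::]. Qed.

Lemma inW_mul w1 w2 : inW S w1 -> inW S w2 -> inW S (w1 *m w2).
Proof.
move=> [s1 [s1S ->]] [s2 [s2S ->]]; exists (s1 ++ s2); rewrite prod_refl_cat; split => //.
by move=> z; rewrite mem_cat => /orP [/s1S | /s2S].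
Qed.

Lemma inW_sref p w : p \in S -> inW S w -> inW S (sref p *m w).
Proof.
move=> pS; apply: inW_mul; exists [:: p]; rewrite /= mulmx1.
by split => // z /[!inE] /eqP ->.
Qed.

Lemma prod_refl_rev s : {subset s <= S} -> prod_refl s *m prod_refl (rev s) = 1%:M.
Proof.
elim: s => [|a s IH] sS /=; first by rewrite mul1mx.
rewrite rev_cons -cats1 prod_refl_cat /= mulmx1 mulmxA -[_ *m prod_refl (rev s)]mulmxA.
rewrite IH ?mulmx1 ?srefK //; first by apply/dot_root_coroot/sS; rewrite inE eqxx.
by move=> z zs; apply: sS; rewrite inE zs orbT.
Qed.

Lemma inW_unit w : inW S w -> w \in unitmx.
Proof. by case=> s [sS ->]; have [] := mulmx1_unit (prod_refl_rev sS). Qed.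

Lemma inW_inv w : inW S w -> inW S (invmx w).
Proof.
case=> s [sS ->]; rewrite (invmx_mulmx1 (prod_refl_rev sS)).
by exists (rev s); split => // z; rewrite mem_rev => /sS.
Qed.

Lemma inW_act w q : inW S w -> q \in S -> (invmx w *m q.1, w^T *m q.2) \in S.
Proof.
case=> s [sS ->]; rewrite (invmx_mulmx1 (prod_refl_rev sS)).
elim: s sS q => [|a s IH] sS q qS /=; first by rewrite trmx1 !mul1mx; case: q qS.
rewrite rev_cons -cats1 prod_refl_cat /= mulmx1 trmx_mul -!mulmxA tr_sref_mul.
have aS : a \in S by apply: sS; rewrite inE eqxx.
apply: (IH _ (srefp a q)); last exact: srefp_in.
by move=> z zs; apply: sS; rewrite inE zs orbT.
Qed.

Lemma inW_regular w q : inW S w -> q \in S -> dot (invmx w *m q.1) xi != 0.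
Proof. by move=> wW qS; have := root_regular (inW_act wW qS). Qed.

(* [level x q] is the integer [k] with [k < <y, q^v> < k + 1] for the points [y]
   of the alcove [x A], [A] being the dominant base alcove. *)
Definition base_level v : int := if pos xi v then 0 else -1.
Definition level x q : int := dot x.1 q.2 + base_level (invmx x.2 *m q.1).

Lemma level1 q : level (0, 1%:M) q = base_level q.1.
Proof. by rewrite /level /= dot0l invmx1 mul1mx add0r. Qed.

Lemma base_levelN v : dot v xi != 0 -> base_level (- v) = -1 - base_level v.
Proof.
by move=> h; rewrite /base_level posN //; case: (pos xi v); rewrite /= ?subrr ?subr0.
Qed.

Lemma levelN x q : inW S x.2 -> q \in S -> level x (negp q) = -1 - level x q.
Proof.
move=> xW qS; rewrite /level /negp /= dotNr mulmxN base_levelN ?inW_regular //.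
by ring.
Qed.

Lemma len_level x : (len S xi x)%:Z = \sum_(q <- S | pos xi q.1) `|level x q|.
Proof.
rewrite /len (big_morph Posz PoszD (erefl 0%:Z)); apply: eq_bigr => q _.
by rewrite /level /base_level; case: ifP => _; rewrite abszE ?addr0.
Qed.

(* Summing over all roots counts each separating hyperplane twice. *)
Lemma len_levelE x : inW S x.2 ->
  (2 * len S xi x)%:Z = \sum_(q <- S) `|level x q - base_level q.1|.
Proof.
move=> xW; rewrite PoszM len_level [RHS](bigID (fun q => pos xi q.1)) /=.
rewrite [X in _ = _ + X](@sum_involution _ _ _ negp (fun q => ~~ pos xi q.1)); last 3 first.
- exact: uniq_root_system.
- exact: negp_in.
- exact: negpK.
have e1 : \sum_(q <- S | pos xi q.1) `|level x q - base_level q.1| =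
          \sum_(q <- S | pos xi q.1) `|level x q|.
  by apply: eq_bigr => q qp; rewrite /base_level qp subr0.
have e2 : \sum_(q <- S | ~~ pos xi (negp q).1) `|level x (negp q) - base_level (negp q).1| =
          \sum_(q <- S | pos xi q.1) `|level x q|.
  rewrite big_seq_cond [RHS]big_seq_cond; apply: eq_big => q.
    by case: (boolP (q \in S)) => //= qS; rewrite posN ?negbK ?root_regular.
  move=> /andP [qS qp]; have qp' : pos xi q.1 by move: qp; rewrite posN ?negbK ?root_regular.
  rewrite levelN // /base_level posN ?root_regular // qp' /=.
  by rewrite -normrN; congr `|_|; ring.
by rewrite e1 e2; ring.
Qed.
End RootSystem.

(* The wall at level [j] separates the cells of levels [a] and [b]. *)
Definition separates (a b j : int) : bool :=
  ((a < j) && (j <= b)) || ((b < j) && (j <= a)).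

(* The number of walls separating [a] from both [b] and [c]. *)
Definition overlap (a b c : int) : int :=
  if (a < b) && (a < c) then (if b - a <= c - a then b - a else c - a)
  else if (b < a) && (c < a) then (if a - b <= a - c then a - b else a - c) else 0.

Lemma overlap_dist a b c : `|c - b| = `|c - a| + `|b - a| - 2 * overlap a b c.
Proof.
by rewrite /overlap; case: ifP => h1; [case: ifP | case: ifP => h2; [case: ifP|]]; lia.
Qed.

Lemma overlap_pair_le a a' c c' t :
  (forall j, separates a (a' + t) j -> separates a c j -> separates a' c' (j - t) -> False) ->
  overlap a (a' + t) c + overlap a' (a - t) c' <= `|a' + t - a|.
Proof.
move=> H; case: (ltrgtP a (a' + t)) => hab.
- by have := H (a + overlap a (a' + t) c); rewrite /separates /overlap; repeat case: ifP; lia.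
- have := H (a - overlap a (a' + t) c + 1); rewrite /separates /overlap.
  by repeat case: ifP; lia.
- by rewrite /overlap; repeat case: ifP; lia.
Qed.

Lemma overlap_pair_lt a a' c c' t j0 :
  separates a (a' + t) j0 -> ~~ separates a c j0 -> ~~ separates a' c' (j0 - t) ->
  overlap a (a' + t) c + overlap a' (a - t) c' < `|a' + t - a|.
Proof.
rewrite /separates /overlap => h1 h2 h3.
by case: (ltrgtP a (a' + t)) => hab; move: h1 h2 h3; repeat case: ifP; lia.
Qed.

Definition cell (N u a : int) : bool := (N * a < u) && (u < N * (a + 1)).

Section Cells.
Variable N : int.
Hypothesis N0 : 0 < N.

Lemma cell_ltE u a j : cell N u a -> (a < j) = (u < N * j).
Proof.
move=> /andP [h1 h2]; apply/idP/idP => h.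
- have : N * (a + 1) <= N * j by rewrite ler_pM2l //; lia.
  lia.
- have : N * a < N * j by lia.
  by rewrite ltr_pM2l.
Qed.

Lemma cell_neq u a j : cell N u a -> u != N * j.
Proof.
move=> ua; apply/negP => /eqP E; move: ua; rewrite /cell E => /andP [h1 h2].
have : a < j by rewrite ltr_pM2l // in h1.
have : j < a + 1 by rewrite ltr_pM2l // in h2.
lia.
Qed.

Lemma separatesE u v a b j : cell N u a -> cell N v b ->
  separates a b j = ((u - N * j) * (v - N * j) < 0).
Proof.
move=> ua vb.
have e1 := cell_ltE j ua; have e2 := cell_ltE j vb.
have n1 := cell_neq j ua; have n2 := cell_neq j vb.
rewrite /separates; apply/idP/idP.
- move/orP => [/andP [x1 x2] | /andP [x1 x2]].
  + by move: x2; rewrite leNgt e2 => x2; rewrite e1 in x1; nia.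
  + by move: x2; rewrite leNgt e1 => x2; rewrite e2 in x1; nia.
- move=> h; rewrite !leNgt e1 e2.
  by case: (ltgtP u (N * j)) => h1; case: (ltgtP v (N * j)) => h2; nia.
Qed.

Lemma cell_shift u a t : cell N u a -> cell N (u + N * t) (a + t).
Proof. by rewrite /cell => /andP [h1 h2]; apply/andP; split; nia. Qed.

Lemma same_side_gt0 zb yb k a c : cell N zb a -> cell N yb c ->
  (k <= c) = (k <= a) -> 0 < (zb - N * k) * (yb - N * k).
Proof.
move=> za yc.
have e1 := cell_ltE k za; have e2 := cell_ltE k yc.
have n1 := cell_neq k za; have n2 := cell_neq k yc.
rewrite !leNgt e1 e2.
by case: (ltgtP zb (N * k)) => h1; case: (ltgtP yb (N * k)) => h2; nia.
Qed.

(* [z - g zb] is the [(s_p q)^v]-coordinate of a point with [q^v]-coordinate [z] and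
   [p^v]-coordinate [zb], where [g = <p, q^v>]; likewise for [y].  The last hypothesis
   puts both points on the same side of the wall [<., p^v> = k]. *)
Lemma no_common_separation z zb y yb g k a a' c c' :
  cell N z a -> cell N (z - g * zb) a' -> cell N y c -> cell N (y - g * yb) c' ->
  0 < (zb - N * k) * (yb - N * k) ->
  forall j, separates a (a' + k * g) j -> separates a c j ->
    separates a' c' (j - k * g) -> False.
Proof.
move=> za za' yc yc' side j.
have zb' := cell_shift (k * g) za'.
rewrite (separatesE j za zb') (separatesE j za yc) (separatesE _ za' yc').
set D := z - N * j; set E := zb - N * k; set F := y - N * j; set G := yb - N * k.
have -> : z - g * zb + N * (k * g) - N * j = D - g * E by rewrite /D /E; ring.
have -> : z - g * zb - N * (j - k * g) = D - g * E by rewrite /D /E; ring.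
have -> : y - g * yb - N * (j - k * g) = F - g * G by rewrite /F /G; ring.
move: side; rewrite -/E -/G => side h1 h2 h3.
case: (ltgtP D 0) => hD.
- have a1 : 0 < D - g * E by nia.
  have a2 : 0 < F by nia.
  have a3 : F - g * G < 0 by nia.
  nia.
- have a1 : D - g * E < 0 by nia.
  have a2 : F < 0 by nia.
  have a3 : 0 < F - g * G by nia.
  nia.
- by move: h1; rewrite hD mul0r ltxx.
Qed.

Lemma separates_at zb yb k a a' c c' : cell N zb a -> cell N (zb - 2 * zb) a' ->
  cell N yb c -> cell N (yb - 2 * yb) c' -> 0 < (zb - N * k) * (yb - N * k) ->
  [/\ separates a (a' + k * 2) k, ~~ separates a c k & ~~ separates a' c' (k - k * 2)].
Proof.
move=> za za' yc yc' side.
have zb' := cell_shift (k * 2) za'.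
rewrite (separatesE _ za zb') (separatesE _ za yc) (separatesE _ za' yc') -!leNgt.
split.
- have -> : zb - 2 * zb + N * (k * 2) - N * k = - (zb - N * k) by ring.
  by case: (ltgtP (zb - N * k) 0) => h; nia.
- exact: ltW.
- have -> : (zb - 2 * zb - N * (k - k * 2)) * (yb - 2 * yb - N * (k - k * 2)) =
            (zb - N * k) * (yb - N * k) by ring.
  exact: ltW.
Qed.
End Cells.

Section AlcovePoint.
Variables (n : nat) (S : seq (rootpair n)) (xi : lat n).
Hypothesis hS : root_system S xi.
Implicit Types (x : tW n) (p q : rootpair n).

(* [rho2 / alcove_scale] lies in the base alcove [A], so [alcove_point x / alcove_scale]
   lies in [x A]. *)
Definition alcove_scale : int := 1 + \sum_(q <- S) `|dot (rho2 S xi) q.2|.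
Definition alcove_point x : lat n := alcove_scale *: x.1 + x.2 *m rho2 S xi.

Lemma alcove_scale_gt0 : 0 < alcove_scale.
Proof. by rewrite /alcove_scale ltr_wpDr // sumr_ge0. Qed.

Lemma alcove_point1 : alcove_point (0, 1%:M) = rho2 S xi.
Proof. by rewrite /alcove_point /= scaler0 add0r mul1mx. Qed.

Lemma alcove_point_cell x q : inW S x.2 -> q \in S ->
  cell alcove_scale (dot (alcove_point x) q.2) (level xi x q).
Proof.
move=> xW qS; have q'S := inW_act hS xW qS.
have hb : `|dot (rho2 S xi) (x.2^T *m q.2)| < alcove_scale.
  have := ler_sum_mem (F := fun q => `|dot (rho2 S xi) q.2|) q'S (fun _ => normr_ge0 _).
  by rewrite /alcove_scale /= => h; apply: le_lt_trans h _; rewrite ltrDr.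
have hz1 := rho2_coroot_gt0 hS q'S; have hz2 := rho2_coroot_lt0 hS q'S.
move: hb hz1 hz2; rewrite /alcove_point dotDl dotZl dot_mulmxl /level /base_level /=.
set u := dot (rho2 S xi) _; set d := dot x.1 q.2 => hb hz1 hz2.
rewrite /cell; case: ifP => hp.
- by have := hz1 hp; rewrite addr0 mulrDr mulr1; lia.
- by have := hz2 (negbT hp); rewrite !mulrDr mulrN1 mulr1; lia.
Qed.
End AlcovePoint.

Section AffineReflection.
Variables (n : nat) (S : seq (rootpair n)) (xi : lat n).
Hypothesis hS : root_system S xi.
Implicit Types (x : tW n) (p q : rootpair n).

Lemma inv_sref_mul p w : p \in S -> inW S w -> invmx (sref p *m w) = invmx w *m sref p.
Proof.
move=> pS wW; apply: invmx_mulmx1.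
rewrite -mulmxA [w *m _]mulmxA (mulmxV (inW_unit hS wW)) mul1mx.
by rewrite srefK ?(dot_root_coroot hS).
Qed.

Lemma level_aref x p k q : inW S x.2 -> p \in S ->
  level xi (mulW (aref p k) x) q = k * dot p.1 q.2 + level xi x (srefp p q).
Proof.
move=> xW pS; rewrite /level /mulW /aref /= dotDl dotZl dot_mulmxl tr_sref_mul.
by rewrite inv_sref_mul // -mulmxA; ring.
Qed.

Lemma arefK x p k : p \in S -> mulW (aref p k) (mulW (aref p k) x) = x.
Proof.
move=> pS; have p2 := dot_root_coroot hS pS; case: x => l w.
rewrite /mulW /aref /= mulmxDr -scalemxAr !mulmxA srefK // !mul1mx [sref p *m p.1]sref_mul p2.
by congr (_, _); apply/matrixP => i j; rewrite !mxE; ring.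
Qed.

Lemma dot_srefp_coroot v p q : dot v (srefp p q).2 = dot v q.2 - dot p.1 q.2 * dot v p.2.
Proof. by rewrite srefpE /= dotBr dotZr. Qed.

Section Exchange.
Variables (x : tW n) (p : rootpair n) (k : int).
Hypotheses (xW : inW S x.2) (pS : p \in S).

(* [a q], [b q] and [c q] are the [q]-levels of [A], of its mirror image in the
   wall [<., p^v> = k], and of [x A]. *)
Let g q : int := dot p.1 q.2.
Let a q : int := base_level xi q.1.
Let b q : int := a (srefp p q) + k * g q.
Let c q : int := level xi x q.
Let defect q : int := `|b q - a q| - overlap (a q) (b q) (c q)
  - overlap (a (srefp p q)) (b (srefp p q)) (c (srefp p q)).

Lemma len_aref_defect : (2 * len S xi (mulW (aref p k) x))%:Z =
  (2 * len S xi x)%:Z + \sum_(q <- S) defect q.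
Proof.
have uS := uniq_root_system hS.
have srefpS q : q \in S -> srefp p q \in S by move=> qS; exact (srefp_in hS pS qS).
have srefpK : involutive (srefp p) by move=> q; exact (srefpK_in hS q pS).
have gN q : g (srefp p q) = - g q.
  by rewrite /g srefpE /= dotBr dotZr (dot_root_coroot hS pS); ring.
have termE q : `|level xi (mulW (aref p k) x) (srefp p q) - base_level xi (srefp p q).1| =
    `|c q - a q| + (`|b q - a q| - 2 * overlap (a q) (b q) (c q)).
  rewrite addrA -overlap_dist level_aref // srefpK -/(g (srefp p q)) gN /b /c /a.
  by congr `|_|; ring.
rewrite (len_levelE hS xW) (len_levelE hS (x := mulW (aref p k) x) (inW_sref pS xW)).
rewrite [LHS](sum_involution xpredT _ uS srefpS srefpK) /= (eq_bigr _ (fun q _ => termE q)).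
rewrite big_split /=; congr (_ + _).
rewrite /defect !sumrB -(sum_involution xpredT
  (fun q => overlap (a q) (b q) (c q)) uS srefpS srefpK) /=.
by rewrite -mulr_sumr; ring.
Qed.

Hypothesis same_side : (k <= level xi x p) = (k <= base_level xi p.1).

Let N := alcove_scale S xi.
Let z := rho2 S xi.
Let y := alcove_point S xi x.

Lemma cell_base q : q \in S -> cell N (dot z q.2) (a q).
Proof.
move=> qS; have := alcove_point_cell hS (x := (0, 1%:M)) (inW1 S) qS.
by rewrite alcove_point1 level1.
Qed.

Lemma cell_x q : q \in S -> cell N (dot y q.2) (c q).
Proof. exact: alcove_point_cell. Qed.

Lemma same_side_pair : 0 < (dot z p.2 - N * k) * (dot y p.2 - N * k).
Proof.
apply: (same_side_gt0 (alcove_scale_gt0 S xi) (cell_base pS) (cell_x pS)).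
by rewrite same_side.
Qed.

Lemma no_common_wall q : q \in S -> forall j,
  separates (a q) (a (srefp p q) + k * g q) j -> separates (a q) (c q) j ->
  separates (a (srefp p q)) (c (srefp p q)) (j - k * g q) -> False.
Proof.
move=> qS; have sqS := srefp_in hS pS qS.
apply: (no_common_separation (alcove_scale_gt0 S xi) (cell_base qS) _ (cell_x qS) _
  same_side_pair).
- by rewrite -dot_srefp_coroot; apply: cell_base.
- by rewrite -dot_srefp_coroot; apply: cell_x.
Qed.

Lemma b_srefp q : q \in S -> b (srefp p q) = a q - k * g q.
Proof.
move=> qS; rewrite /b (srefpK_in hS _ pS) /g srefpE /= dotBr dotZr (dot_root_coroot hS pS).
by ring.
Qed.

Lemma defect_ge0 q : q \in S -> 0 <= defect q.
Proof.
move=> qS; have := overlap_pair_le (no_common_wall qS).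
by rewrite /defect b_srefp // /b; lia.
Qed.

(* The wall [<., p^v> = k] itself separates the base alcove from its reflection,
   but neither from [x A] nor the reflected pair. *)
Lemma defect_p_gt0 : 0 < defect p.
Proof.
have gp : g p = 2 by rewrite /g (dot_root_coroot hS pS).
have spS := srefp_in hS pS pS.
have hz : cell N (dot z p.2 - 2 * dot z p.2) (a (srefp p p)).
  by rewrite -gp -dot_srefp_coroot; apply: cell_base.
have hy : cell N (dot y p.2 - 2 * dot y p.2) (c (srefp p p)).
  by rewrite -gp -dot_srefp_coroot; apply: cell_x.
have [j1 j2 j3] :=
  separates_at (alcove_scale_gt0 S xi) (cell_base pS) hz (cell_x pS) hy same_side_pair.
have := overlap_pair_lt j1 j2 j3.
by rewrite /defect b_srefp // /b gp; lia.
Qed.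

Lemma len_aref_gt : (len S xi x < len S xi (mulW (aref p k) x))%N.
Proof.
have uS := uniq_root_system hS; have := len_aref_defect; rewrite (bigD1_seq p) //=.
set rest := \sum_(q <- S | q != p) defect q.
have : 0 <= rest.
  by rewrite /rest big_seq_cond; apply: sumr_ge0 => q /andP [qS _]; apply: defect_ge0.
have := defect_p_gt0; lia.
Qed.
End Exchange.

Lemma len_aref_lt x p k : inW S x.2 -> p \in S ->
  (k <= level xi x p) != (k <= base_level xi p.1) ->
  (len S xi (mulW (aref p k) x) < len S xi x)%N.
Proof.
move=> xW pS side; set y := mulW (aref p k) x.
have yW : inW S y.2 := inW_sref pS xW.
have := len_aref_gt (k := k) yW pS; rewrite [mulW _ y]arefK //; apply.
rewrite level_aref // (srefp_self hS pS) (levelN hS xW pS) (dot_root_coroot hS pS).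
by move: side; case: (k <= base_level xi p.1); case: (boolP (k <= level xi x p)); lia.
Qed.
End AffineReflection.

Lemma invmx_conj n (V A : 'M[int]_n) : V \in unitmx -> A \in unitmx ->
  invmx (invmx V *m A *m V) = invmx V *m invmx A *m V.
Proof.
move=> uV uA; apply: invmx_mulmx1.
by rewrite -!mulmxA (mulKVmx uV) (mulKVmx uA) mulVmx.
Qed.

Section LeviConjugation.
Variables (n : nat) (R : seq (rootpair n)) (xi mu : lat n) (wM : 'M[int]_n).
Hypotheses (hR : is_root_datum R) (hreg : regular R xi) (hWM : WM R xi mu wM).
Implicit Types (x : tW n) (p q : rootpair n).

Let hRS : root_system R xi := root_datum_system hR hreg.
Let L := levi_roots R mu.

Lemma levi_sub : {subset L <= R}.
Proof. by move=> z; rewrite mem_filter => /andP []. Qed.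

Lemma levi_root_system : root_system L xi.
Proof.
split.
- by rewrite filter_uniq // (uniq_root_system hRS).
- by move=> p /levi_sub; apply: (dot_root_coroot hRS).
- move=> p q; rewrite !mem_filter => /andP [/eqP hp pR] /andP [/eqP hq qR].
  by rewrite (srefp_in hRS) // andbT srefpE /= dotBl dotZl hp hq mulr0 subr0.
- by move=> p /levi_sub; apply: (root_regular hRS).
Qed.

Let hLS := levi_root_system.

Lemma inW_levi w : inW L w -> inW R w.
Proof. by case=> s [sS ->]; exists s; split => // z /sS /levi_sub. Qed.

Lemma wM_inW : inW R wM. Proof. by case: hWM. Qed.

Lemma wM_unit : wM \in unitmx. Proof. exact (inW_unit hRS wM_inW). Qed.

Lemma pos_wM_inv_simple p : simple_root L xi p -> pos xi (invmx wM *m p.1).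
Proof.
move=> sp; have [pL pp _] := sp; have pR := levi_sub pL.
have := (proj2 hWM) p sp; apply: contraLR => hneg; rewrite -leqNgt ltnW //.
have -> : lenW R xi (sref p *m wM) = len R xi (mulW (aref p 0) (0, wM)).
  by rewrite /lenW /mulW /aref /= scale0r add0r mulmx0.
apply: (len_aref_lt hRS) => //.
- exact: wM_inW.
- by rewrite /level /base_level /= dot0l add0r pp (negbTE hneg).
Qed.

(* Induction on the height [<v, xi>]: a positive root of [M] that is not simple
   is a sum of two positive roots of [M] of smaller height. *)
Lemma pos_wM_inv v : v \in L -> pos xi v.1 -> pos xi (invmx wM *m v.1).
Proof.
move=> vL vp; move: {2}(absz (dot v.1 xi)) (leqnn (absz (dot v.1 xi))) => m.
elim: m v vL vp => [|m IH] v vL vp hm.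
  by move: hm; rewrite leqn0 absz_eq0 => /eqP v0; move: vp; rewrite /pos v0.
have [sv | nsv] := classic (simple_root L xi v); first exact: pos_wM_inv_simple.
have [q [r [qL rL qp rp vE]]] :
    exists q r, [/\ q \in L, r \in L, pos xi q.1, pos xi r.1 & v.1 = q.1 + r.1].
  by apply: NNPP => hne; apply: nsv; split.
have hq : (absz (dot q.1 xi) <= m)%N.
  by move: hm vp qp rp; rewrite vE /pos dotDl; lia.
have hr : (absz (dot r.1 xi) <= m)%N.
  by move: hm vp qp rp; rewrite vE /pos dotDl; lia.
have := IH q qL qp hq; have := IH r rL rp hr.
by rewrite vE mulmxDr /pos dotDl => h1 h2; apply: addr_gt0.
Qed.

Lemma base_level_wM_inv v : v \in L -> base_level xi (invmx wM *m v.1) = base_level xi v.1.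
Proof.
move=> vL; rewrite /base_level; congr (if _ then _ else _).
have [vp | vn] := boolP (pos xi v.1); first exact: pos_wM_inv.
have := pos_wM_inv (negp_in hLS vL).
rewrite /negp /= posN ?(root_regular hLS) // vn mulmxN posN; last first.
  exact (inW_regular hRS wM_inW (levi_sub vL)).
by move=> /(_ isT) /negbTE.
Qed.

Lemma conjWE x : conjW wM x = (invmx wM *m x.1, invmx wM *m x.2 *m wM).
Proof. by rewrite /conjW /mulW /= add0r mulmx0 addr0. Qed.

Definition conj_root p : rootpair n := (invmx wM *m p.1, wM^T *m p.2).

Lemma conj_root_in p : p \in L -> conj_root p \in R.
Proof. by move=> pL; apply: (inW_act hRS wM_inW (levi_sub pL)). Qed.

Lemma inW_conj x : inW L x.2 -> inW R (conjW wM x).2.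
Proof.
move=> xW; rewrite conjWE /=; apply: inW_mul; last exact: wM_inW.
by apply: inW_mul; [exact (inW_inv hRS wM_inW) | exact: inW_levi].
Qed.

Lemma level_conj x p : inW L x.2 -> p \in L ->
  level xi (conjW wM x) (conj_root p) = level xi x p.
Proof.
move=> xW pL; have ux := inW_unit hLS xW.
rewrite conjWE /level /conj_root /= dot_mulmxl mulmxA -trmx_mul (mulmxV wM_unit).
rewrite trmx1 mul1mx invmx_conj ?wM_unit // -!mulmxA (mulKVmx wM_unit).
by rewrite (base_level_wM_inv (inW_act hLS xW pL)).
Qed.

Lemma conjW_aref x p k :
  conjW wM (mulW (aref p k) x) = mulW (aref (conj_root p) k) (conjW wM x).
Proof.
rewrite !conjWE /mulW /aref /conj_root /=.
have srefE : sref (invmx wM *m p.1, wM^T *m p.2) *m invmx wM = invmx wM *m sref p.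
  rewrite /sref /= mulmxBl mul1mx mulmxBr mulmx1 trmx_mul trmxK -!mulmxA.
  by rewrite (mulmxV wM_unit) mulmx1.
congr (_, _); first by rewrite mulmxDr -scalemxAr mulmxA [sref _ *m (_ *m _)]mulmxA srefE.
by rewrite !mulmxA srefE.
Qed.

Lemma bruhat_inW x y : bruhat_le L xi x y -> inW L y.2 -> inW L x.2.
Proof.
elim=> {x y} [x y [p [k [pL -> _]]] | x | x y z _ IH1 _ IH2] //=.
- move=> /(inW_sref pL); rewrite mulmxA srefK ?(dot_root_coroot hLS pL) //.
  by rewrite mul1mx.
- by move=> /IH2 /IH1.
Qed.

Lemma bstep_conj x y : bstep L xi x y -> inW L x.2 ->
  bstep R xi (conjW wM x) (conjW wM y).
Proof.
move=> [p [k [pL -> len_lt]]] xW; exists (conj_root p), k.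
rewrite conjW_aref; split => //; first exact: conj_root_in.
apply: (len_aref_gt hRS (inW_conj xW) (conj_root_in pL)).
rewrite level_conj // base_level_wM_inv //.
apply/eqP; apply: contraLR len_lt => side; rewrite -leqNgt ltnW //.
exact: (len_aref_lt hLS xW pL side).
Qed.

Lemma bruhat_conj x y : bruhat_le L xi x y -> inW L y.2 ->
  bruhat_le R xi (conjW wM x) (conjW wM y).
Proof.
elim=> {x y} [x y xy | x | x y z xy IH1 yz IH2] yW.
- by apply/rt_step/bstep_conj => //; apply: (bruhat_inW (rt_step _ _ _ _ xy)).
- exact: rt_refl.
- exact: rt_trans (IH1 (bruhat_inW yz yW)) (IH2 yW).
Qed.
End LeviConjugation.

Theorem mainTheorem14 (n : nat) (R : seq (rootpair n)) (xi mu lam : lat n)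
  (wM : 'M[int]_n) :
  is_root_datum R -> reduced R -> regular R xi ->
  WM R xi mu wM ->
  forall x : tW n, Adm (levi_roots R mu) xi lam x -> Adm R xi lam (conjW wM x).
Proof.
move=> hR _ hreg hWM x [v [vW x_le]].
have hRS := root_datum_system hR hreg.
have := bruhat_conj hR hreg hWM x_le (inW1 _ : inW _ (transl (v *m lam)).2).
rewrite (conjWE wM (transl (v *m lam))) /= mulmx1 (mulVmx (wM_unit hR hreg hWM)) => hb.
exists (invmx wM *m v); split; last by rewrite /transl -mulmxA.
apply: inW_mul; first exact (inW_inv hRS (wM_inW hWM)).
exact: inW_levi vW.
Qed.
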